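(* Let $n\ge2$, $b_1,\dots,b_n\in\mathbb{R}^d$ with $\|b_i\|\le R'$ ($R'>0$), $B=\frac1n[b_1,\dots,b_n]^T$, each $g_i^*:\mathbb{R}\to\mathbb{R}\cup\{+\infty\}$ proper, lower semicontinuous, convex, $g^*(y)=\frac1n\sum_ig_i^*(y_i)$, and $\ell:\mathbb{R}^d\to\mathbb{R}\cup\{+\infty\}$ proper, lower semicontinuous, $\sigma$-strongly convex ($\sigma\ge0$). For the VRPDA$^2$ algorithm in the context, for all $k\ge2$ and all $(u,v)\in\mathcal{X}\times\mathcal{Y}$ (for every realization of the random indices), $$\psi_k(y_k)\le\sum_{i=2}^ka_ig^*_{j_i}(v_{j_i})+a_1g^*(v)+\frac n2\|v-y_0\|^2-\frac n2\|v-y_k\|^2,$$ $$\phi_k(x_k)\le A_k\ell(u)+\frac n2\|u-x_0\|^2-\frac{n+\sigma A_k}{2}\|u-x_k\|^2.$$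
   Context: Norms are Euclidean; $\sigma$-strong convexity of $f$ means $f((1-\alpha)x+\alpha\hat x)\le(1-\alpha)f(x)+\alpha f(\hat x)-\frac\sigma2\alpha(1-\alpha)\|\hat x-x\|^2$. $\mathcal{X}=\mathrm{dom}(\ell)$, $\mathcal{Y}=\mathrm{dom}(g^* )$; $y_{k,j}$ is the $j$-th coordinate of $y_k$. VRPDA$^2$ algorithm: given $(x_0,y_0),(u,v)\in\mathcal{X}\times\mathcal{Y}$: $\phi_0(x)=\frac12\|x-x_0\|^2$, $\psi_0(y)=\frac12\|y-y_0\|^2$, $a_0=A_0=0$, $\tilde a_1=\frac1{2R'}$; $\tilde\psi_1(y)=\psi_0(y)+\tilde a_1(\langle-Bx_0,y-v\rangle+g^*(y))$, $y_1=\arg\min\tilde\psi_1$; $z_1=B^Ty_1$; $\tilde\phi_1(x)=\phi_0(x)+\tilde a_1(\langle x-u,z_1\rangle+\ell(x))$, $x_1=\arg\min\tilde\phi_1$; $\psi_1=n\tilde\psi_1$, $\phi_1=n\tilde\phi_1$, $a_1=A_1=n\tilde a_1$, $a_2=\frac{a_1}{n-1}$, $A_2=A_1+a_2$. For $k=2,3,\dots$: $\bar x_{k-1}=x_{k-1}+\frac{a_{k-1}}{a_k}(x_{k-1}-x_{k-2})$; pick $j_k$ uniformly at random from $\{1,\dots,n\}$; $\psi_k(y)=\psi_{k-1}(y)+a_k(-b_{j_k}^T\bar x_{k-1}(y_{j_k}-v_{j_k})+g^*_{j_k}(y_{j_k}))$, $y_k=\arg\min_y\psi_k(y)$; $\phi_k(x)=\phi_{k-1}(x)+a_k(\langle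 x-u,z_{k-1}+(y_{k,j_k}-y_{k-1,j_k})b_{j_k}\rangle+\ell(x))$, $x_k=\arg\min_x\phi_k(x)$; $z_k=z_{k-1}+\frac1n(y_{k,j_k}-y_{k-1,j_k})b_{j_k}$; $a_{k+1}=\min\{(1+\frac1{n-1})a_k,\frac{\sqrt{n(n+\sigma A_k)}}{2R'}\}$, $A_{k+1}=A_k+a_{k+1}$. *)

From mathcomp Require Import all_boot all_order all_algebra.
From mathcomp Require Import all_classical all_reals all_analysis.

Import Order.TTheory GRing.Theory Num.Theory.
Local Open Scope ring_scope.

Section VRPDA2.
Context {R : realType}.

Definition dotp {m : nat} (x y : 'rV[R]_m) : R := \sum_(i < m) x ord0 i * y ord0 i.
Definition sqnorm {m : nat} (x : 'rV[R]_m) : R := dotp x x.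
Definition enorm {m : nat} (x : 'rV[R]_m) : R := Num.sqrt (sqnorm x).

Local Open Scope ereal_scope.

Definition proper_fun {T : Type} (f : T -> \bar R) : Prop :=
  (forall x, f x != -oo) /\ (exists x, f x < +oo).

Definition convex_ext (f : R -> \bar R) : Prop :=
  forall (x y alpha : R), (0 < alpha < 1)%R ->
    f ((1 - alpha) * x + alpha * y)%R <=
    ((1 - alpha)%R)%:E * f x + alpha%:E * f y.

Definition strongly_convex {m : nat} (sigma : R) (f : 'rV[R]_m -> \bar R) : Prop :=
  forall (x xh : 'rV[R]_m) (alpha : R), (0 < alpha < 1)%R ->
    f ((1 - alpha) *: x + alpha *: xh)%R <=
    ((1 - alpha)%R)%:E * f x + alpha%:E * f xh
      - (sigma / 2 * alpha * (1 - alpha) * sqnorm (xh - x))%:E.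

Definition is_argmin {T : Type} (f : T -> \bar R) (x : T) : Prop :=
  forall x', f x <= f x'.

Variables (n d : nat) (b : 'I_n -> 'rV[R]_d) (Rp sigma : R)
  (gs : 'I_n -> R -> \bar R) (ell : 'rV[R]_d -> \bar R).

Definition gstar (y : 'rV[R]_n) : \bar R :=
  (n%:R^-1)%:E * \sum_(i < n) gs i (y ord0 i).

(* B = (1/n)[b_1,...,b_n]^T : B x and B^T y *)
Definition Bmul (x : 'rV[R]_d) : 'rV[R]_n := \row_(i < n) (n%:R^-1 * dotp (b i) x)%R.
Definition BTmul (y : 'rV[R]_n) : 'rV[R]_d := (n%:R^-1 *: \sum_(i < n) y ord0 i *: b i)%R.

(* step sizes: atilde_1 = 1/(2R'), a_1 = A_1 = n atilde_1, a_2 = a_1/(n-1),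
   a_{k+1} = min{(1+1/(n-1)) a_k, sqrt(n(n+sigma A_k))/(2R')} for k >= 2 *)
Definition at1 : R := (2 * Rp)^-1.
Definition a1 : R := (n%:R * at1)%R.

Fixpoint aA (k : nat) : R * R :=
  match k with
  | 0 => (0%R, 0%R)
  | 1 => (a1, a1)
  | 2 => ((a1 / (n.-1)%:R)%R, (a1 + a1 / (n.-1)%:R)%R)
  | S ((S (S _)) as k') =>
      let ak := (aA k').1 in
      let Ak := (aA k').2 in
      let anew := Num.min ((1 + (n.-1)%:R^-1) * ak)%R
                          (Num.sqrt (n%:R * (n%:R + sigma * Ak)) / (2 * Rp))%R in
      (anew, (Ak + anew)%R)
  end.

Definition aseq (k : nat) : R := (aA k).1.
Definition Aseq (k : nat) : R := (aA k).2.

Variables (x0 : 'rV[R]_d) (y0 : 'rV[R]_n) (u : 'rV[R]_d) (v : 'rV[R]_n)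
  (xs : nat -> 'rV[R]_d) (ys : nat -> 'rV[R]_n) (j : nat -> 'I_n).

Fixpoint zseq (k : nat) : 'rV[R]_d :=
  match k with
  | 0 => 0%R
  | 1 => BTmul (ys 1)
  | S ((S _) as k') =>
      (zseq k' + (n%:R^-1 * (ys k ord0 (j k) - ys k' ord0 (j k))) *: b (j k))%R
  end.

Definition xbar (k : nat) : 'rV[R]_d :=
  (xs k + (aseq k / aseq k.+1) *: (xs k - xs k.-1))%R.

Definition psi0 (y : 'rV[R]_n) : \bar R := (2^-1 * sqnorm (y - y0))%:E.
Definition phi0 (x : 'rV[R]_d) : \bar R := (2^-1 * sqnorm (x - x0))%:E.

Definition psit1 (y : 'rV[R]_n) : \bar R :=
  psi0 y + at1%:E * ((dotp (- Bmul x0) (y - v))%R%:E + gstar y).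

Definition phit1 (x : 'rV[R]_d) : \bar R :=
  phi0 x + at1%:E * ((dotp (x - u) (zseq 1))%:E + ell x).

Fixpoint psi (k : nat) (y : 'rV[R]_n) : \bar R :=
  match k with
  | 0 => psi0 y
  | 1 => n%:R%:E * psit1 y
  | S ((S _) as k') =>
      psi k' y + (aseq k)%:E *
        ((- dotp (b (j k)) (xbar k') * (y ord0 (j k) - v ord0 (j k)))%R%:E
         + gs (j k) (y ord0 (j k)))
  end.

Fixpoint phi (k : nat) (x : 'rV[R]_d) : \bar R :=
  match k with
  | 0 => phi0 x
  | 1 => n%:R%:E * phit1 x
  | S ((S _) as k') =>
      phi k' x + (aseq k)%:E *
        ((dotp (x - u) (zseq k' + (ys k ord0 (j k) - ys k' ord0 (j k)) *: b (j k)))%R%:E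
         + ell x)
  end.

Definition vrpda2_run : Prop :=
  [/\ xs 0 = x0, ys 0 = y0,
      is_argmin psit1 (ys 1), is_argmin phit1 (xs 1) &
      forall k, (2 <= k)%N -> is_argmin (psi k) (ys k) /\ is_argmin (phi k) (xs k)].

End VRPDA2.

(** Both estimates follow from one principle: if [F] is [c]-strongly convex
    and [z] minimizes [F], then [F z + c/2 |y - z|^2 <= F y] for every [y].
    The function [psi_k] is [(n/2)|y - y0|^2] plus convex terms, hence
    [n]-strongly convex; [phi_k] is [(n/2)|x - x0|^2] plus linear terms plus
    the [sigma]-strongly convex [ell] with total weight [A_k], hence
    [(n + sigma A_k)]-strongly convex.  Take [y = v] and [x = u]: every linear
    term of [psi_k] vanishes at [v] and every linear term of [phi_k] vanishes
    at [u], so [psi_k v] and [phi_k u] are exactly the bounds claimed plus the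
    subtracted squares. *)

From mathcomp Require Import all_boot all_order all_algebra.
From mathcomp Require Import all_classical all_reals all_analysis.
From mathcomp Require Import ring lra.
Import Order.TTheory GRing.Theory Num.Theory numFieldNormedType.Exports.
Local Open Scope ring_scope.

Lemma ler_forall_addtM {R : realFieldType} (x y D : R) : 0 <= D ->
  (forall t, 0 < t < 1 -> x <= y + t * D) -> x <= y.
Proof.
move=> D_ge0 xle; apply/ler_addgt0Pr => e e_gt0.
have den_gt0 : 0 < 2 * e + D by lra.
pose t := e / (2 * e + D).
have t_gt0 : 0 < t by apply: divr_gt0.
have t_lt1 : t < 1 by rewrite ltr_pdivrMr // mul1r; lra.
have tD_le : t * D <= e by rewrite mulrAC ler_pdivrMr //; nra.
by have := xle t; rewrite t_gt0 t_lt1 => /(_ isT); lra.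
Qed.

Lemma adde_def_nNy {R : realType} (x y : \bar R) :
  x != -oo%E -> y != -oo%E -> (x +? y)%E.
Proof. by move: x y => [x||] [y||]. Qed.

Lemma mule_nNy {R : realType} (r : R) (y : \bar R) :
  0 <= r -> y != -oo%E -> (r%:E * y != -oo)%E.
Proof.
move=> r_ge0 yNy; rewrite mule_eq_ninfty (negbTE yNy) /=.
have -> : (r%:E < 0)%E = false by rewrite ltNge lee_fin r_ge0.
by case: y yNy => [y||] //= _; rewrite !andbF.
Qed.

Section StrongConvexity.
Context {R : realType} {m : nat}.
Implicit Types (c r t : R) (x y z : 'rV[R]_m) (F G : 'rV[R]_m -> \bar R).

Lemma sqnorm_ge0 x : 0 <= sqnorm x.
Proof. by rewrite /sqnorm /dotp; apply: sumr_ge0 => i _; rewrite -expr2 sqr_ge0. Qed.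

Lemma dotp0l x : dotp 0 x = 0.
Proof. by rewrite /dotp big1 // => i _; rewrite mxE mul0r. Qed.

Lemma dotp0r x : dotp x 0 = 0.
Proof. by rewrite /dotp big1 // => i _; rewrite mxE mulr0. Qed.

Lemma dotp_mixl x y z w t :
  dotp ((1 - t) *: x + t *: y - z) w = (1 - t) * dotp (x - z) w + t * dotp (y - z) w.
Proof. by rewrite /dotp !mulr_sumr -big_split /=; apply: eq_bigr => i _; rewrite !mxE; ring. Qed.

Lemma dotp_mixr x y z w t :
  dotp w ((1 - t) *: x + t *: y - z) = (1 - t) * dotp w (x - z) + t * dotp w (y - z).
Proof. by rewrite /dotp !mulr_sumr -big_split /=; apply: eq_bigr => i _; rewrite !mxE; ring. Qed.

(* The defect of [x |-> |x|^2 / 2] in Jensen's inequality along [[x, y]]. *)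
Definition convexity_gap t x y : R := t * (1 - t) / 2 * sqnorm (y - x).

Lemma convexity_gap_ge0 x y t : 0 < t < 1 -> 0 <= convexity_gap t x y.
Proof.
move=> /andP[t_gt0 t_lt1]; apply: mulr_ge0; last exact: sqnorm_ge0.
by apply: divr_ge0 => //; apply: mulr_ge0; lra.
Qed.

(* [strongly_convex c F] for an [F] that never takes [-oo], with the modulus
   moved to the left so that it adds up under sums and nonnegative scalings. *)
Definition sconvex c F : Prop :=
  (forall x, F x != -oo%E) /\
  forall x y t, 0 < t < 1 ->
    (F ((1 - t) *: x + t *: y)%R + (c * convexity_gap t x y)%:E
      <= (1 - t)%:E * F x + t%:E * F y)%E.

Lemma strongly_convex_sconvex c F :
  (forall x, F x != -oo%E) -> strongly_convex c F -> sconvex c F.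
Proof.
move=> FNy Fsc; split => // x y t t01.
have := Fsc x y t t01; rewrite leeBrDr //.
suff -> : c * convexity_gap t x y = c / 2 * t * (1 - t) * sqnorm (y - x) by [].
by rewrite /convexity_gap; ring.
Qed.

Lemma sconvexD c c1 c2 F G : c <= c1 + c2 ->
  sconvex c1 F -> sconvex c2 G -> sconvex c (fun x => F x + G x)%E.
Proof.
move=> c_le [FNy Fc] [GNy Gc]; split=> [x|x y t t01].
  by rewrite adde_eq_ninfty negb_or FNy GNy.
have gap_ge0 := convexity_gap_ge0 x y _ t01.
apply: (@le_trans _ _ (F ((1 - t) *: x + t *: y)%R + G ((1 - t) *: x + t *: y)%R
   + ((c1 + c2) * convexity_gap t x y)%:E)%E).
  by apply: leeD => //; rewrite lee_fin ler_wpM2r.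
rewrite mulrDl EFinD addeACA; apply: le_trans (leeD (Fc x y t t01) (Gc x y t t01)) _.
by rewrite !muleDr ?adde_def_nNy // addeACA.
Qed.

Lemma sconvexZ c c1 r F : 0 <= r -> c <= r * c1 ->
  sconvex c1 F -> sconvex c (fun x => r%:E * F x)%E.
Proof.
move=> r_ge0 c_le [FNy Fc]; split=> [x|x y t t01]; first exact: mule_nNy.
have gap_ge0 := convexity_gap_ge0 x y _ t01.
have [t_ge0 t_le1] : 0 <= t /\ 0 <= 1 - t by case/andP: t01; lra.
apply: (@le_trans _ _ (r%:E * F ((1 - t) *: x + t *: y)%R
   + (r * c1 * convexity_gap t x y)%:E)%E).
  by apply: leeD => //; rewrite lee_fin ler_wpM2r.
rewrite -mulrA EFinM -muleDr ?adde_def_nNy //.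
apply: le_trans (lee_wpmul2l _ (Fc x y t t01)) _; first by rewrite lee_fin.
rewrite muleDr ?adde_def_nNy ?mule_nNy //.
by rewrite !muleA (muleC r%:E) (muleC r%:E).
Qed.

Lemma sconvex_affine (L : 'rV[R]_m -> R) :
  (forall x y t, L ((1 - t) *: x + t *: y) = (1 - t) * L x + t * L y) ->
  sconvex 0 (fun x => (L x)%:E).
Proof. by move=> Laff; split=> // x y t _; rewrite mul0r adde0 -!EFinM -EFinD Laff. Qed.

Lemma sconvex_half_sqdist z : sconvex 1 (fun x => (2^-1 * sqnorm (x - z))%:E).
Proof.
split=> // x y t _; rewrite -!EFinM -!EFinD lee_fin le_eqVlt; apply/orP; left.
rewrite mul1r /convexity_gap /sqnorm /dotp ?(mulr_sumr, mulr_suml) -!big_split /=.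
by apply/eqP/eq_bigr => i _; rewrite !mxE; ring.
Qed.

Lemma sconvex_coord (g : R -> \bar R) (i : 'I_m) :
  convex_ext g -> (forall s, g s != -oo%E) -> sconvex 0 (fun y => g (y ord0 i)).
Proof. by move=> gconv gNy; split=> // x y t t01; rewrite mul0r adde0 !mxE gconv. Qed.

Lemma sconvex_sum (I : Type) (s : seq I) (P : pred I) (F : I -> 'rV[R]_m -> \bar R) :
  (forall i, sconvex 0 (F i)) -> sconvex 0 (fun y => \sum_(i <- s | P i) F i y)%E.
Proof.
move=> Fc; elim: s => [|h s IH].
  rewrite (_ : (fun y => _) = fun=> 0%:E); last by apply: boolp.funext => y; rewrite big_nil.
  by apply: sconvex_affine => x y t; rewrite !mulr0 addr0.
have /boolp.funext -> : (fun y => \sum_(i <- h :: s | P i) F i y)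
    =1 fun y => ((if P h then F h y else 0) + \sum_(i <- s | P i) F i y)%E.
  by move=> y; rewrite big_cons; case: (P h); rewrite ?add0e.
apply: (@sconvexD _ 0 0); [by rewrite addr0| |exact: IH].
case: (P h); first exact: Fc.
by apply: sconvex_affine => x y t; rewrite !mulr0 addr0.
Qed.

Lemma sconvex_argmin {c F z} y : sconvex c F -> 0 <= c -> is_argmin F z ->
  (F z + (c / 2 * sqnorm (y - z))%:E <= F y)%E.
Proof.
move=> [FNy Fc] c_ge0 zmin.
case Fy: (F y) => [r| |]; [|exact: leey|by have := FNy y; rewrite Fy].
case Fz: (F z) => [s| |]; [|by have := zmin y; rewrite Fz Fy|by have := FNy z; rewrite Fz].
rewrite -EFinD lee_fin.
set D := c / 2 * sqnorm (y - z).
have D_ge0 : 0 <= D by apply: mulr_ge0; [apply: divr_ge0|exact: sqnorm_ge0].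
(* Minimality of [z] against [(1 - t) z + t y] gives [s + D <= r + t D]. *)
apply: (@ler_forall_addtM R _ _ D D_ge0) => t t01; have /andP[t_gt0 t_lt1] := t01.
have : (s%:E + (c * convexity_gap t z y)%:E <= (1 - t)%:E * s%:E + t%:E * r%:E)%E.
  by rewrite -Fz -Fy; apply: le_trans (Fc z y t t01); rewrite leeD2r.
have -> : c * convexity_gap t z y = t * (1 - t) * D by rewrite /convexity_gap /D; ring.
rewrite -!EFinM -!EFinD lee_fin; nra.
Qed.

End StrongConvexity.

Section VRPDA2Estimates.
Context {R : realType} {n d : nat} {b : 'I_n -> 'rV[R]_d} {Rp sigma : R}
  {gs : 'I_n -> R -> \bar R} {ell : 'rV[R]_d -> \bar R}
  {x0 : 'rV[R]_d} {y0 : 'rV[R]_n} {u : 'rV[R]_d} {v : 'rV[R]_n}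
  {xs : nat -> 'rV[R]_d} {ys : nat -> 'rV[R]_n} {j : nat -> 'I_n}.
Hypothesis Rp_gt0 : 0 < Rp.
Hypotheses (gs_nNy : forall i s, gs i s != -oo%E) (gs_convex : forall i, convex_ext (gs i)).
Hypotheses (ell_nNy : forall x, ell x != -oo%E) (ell_sconvex : strongly_convex sigma ell).

Local Notation aseq := (aseq n Rp sigma).
Local Notation Aseq := (Aseq n Rp sigma).
Local Notation psi := (psi n d b Rp sigma gs x0 y0 v xs j).
Local Notation phi := (phi n d b Rp sigma ell x0 u ys j).

Lemma at1_ge0 : 0 <= at1 Rp.
Proof. by rewrite /at1 invr_ge0 mulr_ge0 // ltW. Qed.

Lemma aseq_ge0 i : 0 <= aseq i.
Proof.
have a1_ge0 : 0 <= a1 n Rp by rewrite /a1 mulr_ge0 ?at1_ge0.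
case: i => [|[|i]] //; elim: i => [|i IH]; first by rewrite /aseq /= divr_ge0.
rewrite /aseq /= le_min mulr_ge0 ?addr_ge0 ?invr_ge0 //=.
by rewrite divr_ge0 ?sqrtr_ge0 // mulr_ge0 // ltW.
Qed.

Lemma AseqS k : (0 < k)%N -> Aseq k.+1 = Aseq k + aseq k.+1.
Proof. by case: k => [|[|k]]. Qed.

Lemma Aseq_ge0 k : 0 <= Aseq k.
Proof.
elim: k => [|k IH]; first by [].
case: k IH => [|k] IH; first by rewrite /Aseq /= /a1 mulr_ge0 ?at1_ge0.
by rewrite AseqS // addr_ge0 ?aseq_ge0.
Qed.

Lemma gstar_sconvex : sconvex 0 (gstar n gs).
Proof.
apply: (@sconvexZ _ _ _ 0); [by rewrite invr_ge0|by rewrite mulr0|].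
by apply: sconvex_sum => i; apply: sconvex_coord.
Qed.

Lemma psi_sconvex k : (0 < k)%N -> sconvex n%:R (psi k).
Proof.
elim: k => [//|[|k] IH _].
  apply: (@sconvexZ _ _ _ 1); [by []|by rewrite mulr1|].
  apply: (@sconvexD _ _ _ 1 0); [by rewrite addr0|exact: sconvex_half_sqdist|].
  apply: (@sconvexZ _ _ _ 0); [exact: at1_ge0|by rewrite mulr0|].
  apply: (@sconvexD _ _ _ 0 0); [by rewrite addr0| |exact: gstar_sconvex].
  by apply: sconvex_affine => x y t; rewrite dotp_mixr.
apply: (@sconvexD _ _ _ n%:R 0); [by rewrite addr0|exact: IH|].
apply: (@sconvexZ _ _ _ 0); [exact: aseq_ge0|by rewrite mulr0|].
apply: (@sconvexD _ _ _ 0 0); [by rewrite addr0| |exact: sconvex_coord].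
by apply: sconvex_affine => x y t; rewrite !mxE; ring.
Qed.

Lemma phi_sconvex k : (0 < k)%N -> sconvex (n%:R + sigma * Aseq k) (phi k).
Proof.
have ellc : sconvex sigma ell by exact: strongly_convex_sconvex.
have ell_lin_sconvex w : sconvex sigma (fun x => ((dotp (x - u) w)%:E + ell x)%E).
  apply: (@sconvexD _ _ _ 0 sigma); [by rewrite add0r| |exact: ellc].
  by apply: sconvex_affine => x y t; rewrite dotp_mixl.
elim: k => [//|[|k] IH _].
  apply: (@sconvexZ _ _ _ (1 + at1 Rp * sigma)); first by [].
    by rewrite /Aseq /= /a1 le_eqVlt; apply/orP; left; apply/eqP; ring.
  apply: (@sconvexD _ _ _ 1 (at1 Rp * sigma)); [by []|exact: sconvex_half_sqdist|].
  by apply: (@sconvexZ _ _ _ sigma); [exact: at1_ge0|by []|].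
apply: (@sconvexD _ _ _ (n%:R + sigma * Aseq k.+1) (aseq k.+2 * sigma)).
- by rewrite AseqS // le_eqVlt; apply/orP; left; apply/eqP; ring.
- exact: IH.
- by apply: (@sconvexZ _ _ _ sigma); [exact: aseq_ge0|by []|].
Qed.

Lemma psiSS k y : psi k.+2 y = (psi k.+1 y + (aseq k.+2)%:E *
  ((- dotp (b (j k.+2)) (xbar n d Rp sigma xs k.+1) * (y ord0 (j k.+2) - v ord0 (j k.+2)))%:E
   + gs (j k.+2) (y ord0 (j k.+2))))%E.
Proof. by []. Qed.

Lemma phiSS k x : phi k.+2 x = (phi k.+1 x + (aseq k.+2)%:E *
  ((dotp (x - u) (zseq n d b ys j k.+1
                  + (ys k.+2 ord0 (j k.+2) - ys k.+1 ord0 (j k.+2)) *: b (j k.+2)))%:E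
   + ell x))%E.
Proof. by []. Qed.

Lemma psi_v k : (0 < k)%N -> psi k v =
  (\sum_(2 <= i < k.+1) (aseq i)%:E * gs (j i) (v ord0 (j i))
   + (aseq 1)%:E * gstar n gs v + (n%:R / 2 * sqnorm (v - y0))%:E)%E.
Proof.
elim: k => [//|[|k] IH _].
  rewrite /= /psit1 /psi0 subrr dotp0r add0e big_geq // add0e muleDr //.
  by rewrite muleA -EFinM addeC mulrA.
rewrite psiSS IH // subrr mulr0 add0e (big_nat_recr k.+2) //=.
by rewrite addeAC; congr (_ + _)%E; rewrite addeAC.
Qed.

Lemma phi_u {e} : ell u = e%:E -> forall k, (0 < k)%N ->
  phi k u = (Aseq k * e + n%:R / 2 * sqnorm (u - x0))%:E.
Proof.
move=> ell_u; elim=> [//|[|k] IH _].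
  rewrite /= /phit1 /phi0 subrr dotp0l ell_u -!EFinD -!EFinM.
  by congr EFin; rewrite /Aseq /= /a1; ring.
rewrite phiSS IH // subrr dotp0l ell_u -EFinD.
by congr EFin; rewrite (AseqS k.+1) //; ring.
Qed.

End VRPDA2Estimates.

Local Open Scope ereal_scope.

Theorem lemma4 (R : realType) (n d : nat) (b : 'I_n -> 'rV[R]_d) (Rp sigma : R)
  (gs : 'I_n -> R -> \bar R) (ell : 'rV[R]_d -> \bar R)
  (x0 : 'rV[R]_d) (y0 : 'rV[R]_n) (u : 'rV[R]_d) (v : 'rV[R]_n)
  (xs : nat -> 'rV[R]_d) (ys : nat -> 'rV[R]_n) (j : nat -> 'I_n) :
  (2 <= n)%N ->
  (0 < Rp)%R ->
  (forall i, enorm (b i) <= Rp)%R ->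
  (forall i, proper_fun (gs i)) ->
  (forall i, lower_semicontinuous (gs i)) ->
  (forall i, convex_ext (gs i)) ->
  proper_fun ell ->
  lower_semicontinuous ell ->
  (0 <= sigma)%R ->
  strongly_convex sigma ell ->
  ell u < +oo ->
  gstar n gs v < +oo ->
  vrpda2_run n d b Rp sigma gs ell x0 y0 u v xs ys j ->
  forall k, (2 <= k)%N ->
    psi n d b Rp sigma gs x0 y0 v xs j k (ys k) <=
      \sum_(2 <= i < k.+1) (aseq n Rp sigma i)%:E * gs (j i) (v ord0 (j i))
      + (aseq n Rp sigma 1)%:E * gstar n gs v
      + (n%:R / 2 * sqnorm (v - y0))%:E
      - (n%:R / 2 * sqnorm (v - ys k))%:E
    /\
    phi n d b Rp sigma ell x0 u ys j k (xs k) <=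
      (Aseq n Rp sigma k)%:E * ell u
      + (n%:R / 2 * sqnorm (u - x0))%:E
      - ((n%:R + sigma * Aseq n Rp sigma k) / 2 * sqnorm (u - xs k))%:E.
Proof.
(* Lower semicontinuity and the bound on the [b i] only serve the existence of
   the minimizers, which [vrpda2_run] takes as given. *)
move=> _ Rp_gt0 _ gs_proper _ gs_convex ell_proper _ sigma_ge0 ell_sc ell_u_lt _
  [_ _ _ _ run] k k_ge2.
have gs_nNy i s : gs i s != -oo by case: (gs_proper i).
have ell_nNy x : ell x != -oo by case: ell_proper.
have k_gt0 : (0 < k)%N by exact: ltnW.
have [ys_min xs_min] := run k k_ge2.
split.
  have := sconvex_argmin v (psi_sconvex Rp_gt0 gs_nNy gs_convex _ k_gt0) (ler0n _ _) ys_min.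
  by rewrite psi_v // -leeBrDr.
have [e ell_u] : exists e, ell u = e%:E.
  by move: ell_u_lt (ell_nNy u); case: (ell u) => [e _ _|//|//]; exists e.
have c_ge0 : (0 <= n%:R + sigma * Aseq n Rp sigma k)%R.
  by rewrite addr_ge0 ?mulr_ge0 ?Aseq_ge0.
have := sconvex_argmin u (phi_sconvex Rp_gt0 ell_nNy ell_sc _ k_gt0) c_ge0 xs_min.
by rewrite (phi_u ell_u) // ell_u -leeBrDr.
Qed.
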